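(* For every infinite binary sequence $b\in\{0,1\}^{\mathbb N}$, the set $F_b=\{v\in\mathscr C : \rho(v)=b\}$ satisfies $$F_b=\{\langle a\rangle \sigma(b) : a\in\mathbb N^{\mathbb N}\}.$$ Consequently $F_b$ is uncountable, $\sigma(b)$ is the unique element of $F_b$ containing no two consecutive $0$'s, and $\sigma(b)$ is the maximum of $F_b$ with respect to the lexicographic order.
   Context: Binary words are finite or infinite sequences over $\{0,1\}$. Define $\rho$ on binary words: for $b=b_1b_2\dots$, $\rho(b)$ is obtained by deleting every digit $b_n=0$ and replacing every $b_n=1$ by $0$ if $n$ is odd and by $1$ if $n$ is even. Let $\mathscr C$ be the set of infinite binary sequences containing infinitely many $1$'s. Define $\sigma$ on a binary sequence $b=b_1b_2\dots$ as the concatenation $\sigma(b)=s_1s_2\dots$ where $s_1=1$ if $b_1=0$ and $s_1=01$ if $b_1=1$, and for $n\ge2$, $s_n=1$ if $b_n\ne b_{n-1}$ and $s_n=01$ if $b_n=b_{n-1}$. For $a=(a_1,a_2,\dots)\in\mathbb N^{\mathbb N}$ (with $\mathbb N$ including $0$) and $c\in\mathscr C$, $\langle a\rangle c$ denotes the sequence obtained from $c$ by inserting the block $0^{2a_k}$ immediately before the $k$-th occurrence of $1$ in $c$, for every $k\ge1$. *)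

From mathcomp Require Import all_boot.
Set Implicit Arguments. Unset Strict Implicit. Unset Printing Implicit Defensive.

(* Infinite binary sequences b = b_1 b_2 ... are functions nat -> bool,
   0-indexed: (b i) is the digit b_{i+1}; true = 1, false = 0. *)

Definition pref (v : nat -> bool) (n : nat) : seq bool := mkseq v n.

Definition inC (v : nat -> bool) : Prop := forall n, exists m, n <= m /\ v m = true.

(* rho(v) = b, for v with infinitely many 1's: the (k+1)-th digit of rho(v)
   comes from the (k+1)-th 1 of v, located at 0-indexed position p
   (1-indexed position p+1); it is 0 if p+1 is odd and 1 if p+1 is even,
   i.e. it equals (odd p). *)
Definition rho_is (v b : nat -> bool) : Prop :=
  forall k p, v p = true -> count id (pref v p) = k -> b k = odd p.

Definition inF (b v : nat -> bool) : Prop := inC v /\ rho_is v b.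

Definition sigma_block (b : nat -> bool) (n : nat) : seq bool :=
  match n with
  | 0 => if b 0 then [:: false; true] else [:: true]
  | n'.+1 => if b n == b n' then [:: false; true] else [:: true]
  end.

(* sigma(b) = s_1 s_2 ...; each block is nonempty, so the first i+1 blocks
   already determine the digit at (0-indexed) position i. *)
Definition sigma (b : nat -> bool) : nat -> bool :=
  fun i => nth false (flatten (mkseq (sigma_block b) i.+1)) i.

(* finite insertion: k = number of 1's already read *)
Fixpoint ins (a : nat -> nat) (l : seq bool) (k : nat) : seq bool :=
  match l with
  | [::] => [::]
  | true :: l' => nseq (2 * a k) false ++ true :: ins a l' k.+1
  | false :: l' => false :: ins a l' k
  end.

(* <a>c : insert 0^{2 a_k} before the k-th 1 of c (a_k is (a (k-1)) here).
   The image of a prefix of length i+1 has length >= i+1 and is a prefix of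
   the result, so it determines the digit at position i. *)
Definition insert (a : nat -> nat) (c : nat -> bool) : nat -> bool :=
  fun i => nth false (ins a (pref c i.+1) 0) i.

Definition no00 (v : nat -> bool) : Prop := forall i, v i || v i.+1.

Definition lex_le (u w : nat -> bool) : Prop :=
  u =1 w \/ exists n, (forall i, i < n -> u i = w i) /\ u n = false /\ w n = true.

Definition countable_set (S : (nat -> bool) -> Prop) : Prop :=
  exists f : nat -> nat -> bool, forall v, S v -> exists n, f n =1 v.

From mathcomp Require Import all_boot zify.
From Stdlib Require Import Classical_Prop.
Set Implicit Arguments. Unset Strict Implicit. Unset Printing Implicit Defensive.

(* The whole argument is carried out on the positions of the 1's.  A sequence
   with infinitely many 1's is determined by the strictly increasing
   enumeration P of its 1's (ones_enum v P), and rho(v) = b says exactly that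
   odd (P k) = b k, since P k is preceded by k ones.  Hence F_b corresponds to
   the strictly increasing sequences P with prescribed parities.
   - sigma(b) has its k-th one at sigma_pos b k, obtained from the previous one
     by a step of 1 or 2: the smallest sequence with the prescribed parities.
   - <a>c shifts the k-th one of c to the right by 2 (a_0 + ... + a_k).
   - Arithmetic: every admissible P is sigma_pos b + 2 D with D nondecreasing
     (shift_decomposition), and it equals sigma_pos b as soon as P 0 <= 1 and all
     steps are <= 2 (tight_positions), which is what "no 00" means (no00_enum).
   The four claims then follow: the description of F_b; uncountability by a
   diagonal argument coding bits into the shifts D k = k + e k; uniqueness of
   sigma(b) among sequences without 00; lexicographic maximality, because the
   first differing one of v lies to the right of that of sigma(b). *)

Definition ones_enum (v : nat -> bool) (P : nat -> nat) : Prop :=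
  (forall k, P k < P k.+1) /\ (forall i, v i = true <-> exists k, P k = i).

Definition ones_before (v : nat -> bool) (n : nat) : nat := count id (pref v n).

Lemma ones_beforeS v n : ones_before v n.+1 = ones_before v n + v n.
Proof. by rewrite /ones_before /pref mkseqS -cats1 count_cat /=; case: (v n). Qed.

Lemma ones_before_const v m n :
  m <= n -> (forall i, m <= i < n -> v i = false) -> ones_before v n = ones_before v m.
Proof.
elim: n => [|n IH]; first by rewrite leqn0 => /eqP ->.
rewrite leq_eqVlt ltnS => /orP [/eqP -> //|le_mn] zero.
rewrite ones_beforeS zero /= ?le_mn ?ltnSn // addn0 IH // => i /andP [le_mi lt_in].
by apply: zero; rewrite le_mi ltnW.
Qed.

Section Increasing.
Variable P : nat -> nat.
Hypothesis P_inc : forall k, P k < P k.+1.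

Lemma inc_lt : {homo P : j k / j < k}.
Proof. exact: homo_ltn ltn_trans P_inc. Qed.

Lemma inc_le : {homo P : j k / j <= k}.
Proof. exact: homo_leq leqnn leq_trans (fun k => ltnW (P_inc k)). Qed.

Lemma inc_ge k : k <= P k.
Proof. by elim: k => // k IH; apply: leq_ltn_trans IH (P_inc k). Qed.

End Increasing.

Section Enumeration.
Variables (v : nat -> bool) (P : nat -> nat).
Hypothesis v_P : ones_enum v P.

Lemma enum_one k : v (P k).
Proof. by apply/(proj2 v_P); exists k. Qed.

Lemma enum_zero (i : nat) : (forall k, P k != i) -> v i = false.
Proof. by move=> notP; apply/negbTE/negP => /(proj2 v_P) [k /eqP]; rewrite (negbTE (notP k)). Qed.

Lemma enum_zero_before i : i < P 0 -> v i = false.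
Proof.
move=> lt_i0; apply: enum_zero => k; apply: contraTneq lt_i0 => <-.
by rewrite -leqNgt (inc_le (proj1 v_P)).
Qed.

Lemma enum_zero_between k i : P k < i < P k.+1 -> v i = false.
Proof.
move=> /andP [lt_ki lt_ik1]; apply: enum_zero => j; apply/eqP => eq_ji.
have [le_jk|lt_kj] := leqP j k.
  by have := inc_le (proj1 v_P) le_jk; rewrite eq_ji leqNgt lt_ki.
by have := inc_le (proj1 v_P) lt_kj; rewrite eq_ji leqNgt lt_ik1.
Qed.

Lemma ones_before_enum k : ones_before v (P k) = k.
Proof.
elim: k => [|k IH].
  rewrite (@ones_before_const _ 0) // => i /andP [_]; exact: enum_zero_before.
rewrite (@ones_before_const _ (P k).+1) ?(proj1 v_P) //; last exact: enum_zero_between.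
by rewrite ones_beforeS IH enum_one addn1.
Qed.

Lemma enum_inC : inC v.
Proof. by move=> n; exists (P n); rewrite inc_ge ?enum_one //; case: v_P. Qed.

Lemma enum_rho b : rho_is v b <-> forall k, odd (P k) = b k.
Proof.
split=> [rho k | odd_P k p /(proj2 v_P) [j <-]].
  by rewrite (rho k (P k)) ?enum_one //; apply: ones_before_enum.
by rewrite -/(ones_before v (P j)) ones_before_enum => <-.
Qed.

End Enumeration.

(* Conversely every v in C has an enumeration of its 1's: the k-th one is
   reached by repeatedly jumping to the next 1. *)
Lemma enum_of_inC v : inC v -> exists P, ones_enum v P.
Proof.
move=> v_C.
have ex_one n : exists m, (n <= m) && v m.
  by have [m [le_nm v_m]] := v_C n; exists m; rewrite le_nm v_m.
pose next n := ex_minn (ex_one n).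
have nextP n : [/\ n <= next n, v (next n) & forall m, n <= m -> v m -> next n <= m].
  rewrite /next; case: ex_minnP => m /andP [le_nm v_m] min_m.
  by split=> // m' le_nm' v_m'; apply: min_m; rewrite le_nm' v_m'.
pose fix P k := if k is k'.+1 then next (P k').+1 else next 0.
have P_inc k : P k < P k.+1 by have [] := nextP (P k).+1.
exists P; split=> // i; split=> [v_i | [[|k] <-]]; last first.
- by have [] := nextP (P k).+1.
- by have [] := nextP 0.
suff hit k : i <= P k -> exists j, P j = i by exact: (hit i (inc_ge P_inc i)).
elim: k => [|k IH] le_iP.
  exists 0; apply/eqP; rewrite eqn_leq le_iP.
  by have [_ _ ->] := nextP 0.
have [/IH //|lt_Pi] := leqP i (P k).
exists k.+1; apply/eqP; rewrite eqn_leq le_iP.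
by have [_ _ ->] := nextP (P k).+1.
Qed.

Lemma enum_congr v w P R : v =1 w -> P =1 R -> ones_enum w P -> ones_enum v R.
Proof.
move=> eq_vw eq_PR [P_inc w_P]; split=> [k | i]; first by rewrite -!eq_PR.
rewrite eq_vw w_P; split=> [[k <-] | [k <-]]; exists k; by rewrite eq_PR.
Qed.

Lemma enum_ext v w P R : ones_enum v P -> ones_enum w R -> P =1 R -> v =1 w.
Proof.
move=> [_ v_P] [_ w_R] eq_PR i; apply/idP/idP => [/v_P [k <-] | /w_R [k <-]].
  by apply/w_R; exists k.
by apply/v_P; exists k.
Qed.

Lemma no00_enum v P : ones_enum v P ->
  no00 v <-> P 0 <= 1 /\ forall k, P k.+1 <= (P k).+2.
Proof.
move=> v_P; split=> [v_no00 | [P0 P_step] i].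
  split=> [|k]; rewrite leqNgt; apply/negP => big_gap.
    by have := v_no00 0; rewrite !(enum_zero_before v_P) //; apply: ltnW.
  have := v_no00 (P k).+1.
  by rewrite !(enum_zero_between v_P (k := k)) //; apply/andP; split; lia.
have ex_above : exists k, i <= P k by exists i; exact: (inc_ge (proj1 v_P)).
case: (ex_minnP ex_above) => k le_ik min_k.
have [-> | neq_ik] := eqVneq i (P k); first by rewrite (enum_one v_P).
have -> : i.+1 = P k.
  case: k le_ik min_k neq_ik => [|k] le_ik min_k neq_ik; first by lia.
  have := P_step k; have : P k < i by rewrite ltnNge; apply/negP => /min_k; rewrite ltnn.
  by lia.
by rewrite (enum_one v_P) orbT.
Qed.

(* If the enumerations agree before index n and the n-th one of w comes first,
   then w is lexicographically larger: the first difference is at R n. *)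
Lemma lex_first_difference v w P R n : ones_enum v P -> ones_enum w R ->
  (forall k, k < n -> P k = R k) -> R n < P n -> lex_le v w.
Proof.
move=> v_P w_R same_below lt_RP; right; exists (R n); split; last first.
  split; last exact: (enum_one w_R n).
  apply: (enum_zero v_P) => k; apply/eqP => eq_k.
  have [lt_kn | le_nk] := ltnP k n.
    by have := inc_lt (proj1 w_R) lt_kn; rewrite -same_below // eq_k ltnn.
  by have := inc_le (proj1 v_P) le_nk; rewrite eq_k leqNgt lt_RP.
move=> i lt_i; apply/idP/idP => [/(proj2 v_P) [k eq_ki] | /(proj2 w_R) [k eq_ki]]; subst i.
  have [lt_kn | le_nk] := ltnP k n; first by rewrite same_below ?(enum_one w_R).
  by exfalso; have := inc_le (proj1 v_P) le_nk; lia.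
have [lt_kn | le_nk] := ltnP k n; first by rewrite -same_below ?(enum_one v_P).
by exfalso; have := inc_le (proj1 w_R) le_nk; lia.
Qed.

(* sigma(b) is the concatenation of the blocks 0^z 1 with z = block_zeros b k;
   its k-th one therefore sits at sigma_pos b k. *)
Section Sigma.
Variable b : nat -> bool.

Definition block_zeros (k : nat) : nat := if k is k'.+1 then b k == b k' else b 0.

Fixpoint sigma_pos (k : nat) : nat :=
  if k is k'.+1 then (sigma_pos k' + block_zeros k).+1 else block_zeros 0.

Definition sigma_prefix (n : nat) : seq bool := flatten (mkseq (sigma_block b) n).

Lemma sigma_blockE k : sigma_block b k = rcons (nseq (block_zeros k) false) true.
Proof. by case: k => [|k] /=; [case: (b 0) | case: (_ == _)]. Qed.

Lemma sigma_prefixS n :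
  sigma_prefix n.+1 = sigma_prefix n ++ rcons (nseq (block_zeros n) false) true.
Proof. by rewrite /sigma_prefix mkseqS flatten_rcons sigma_blockE. Qed.

Lemma size_sigma_prefix n : size (sigma_prefix n) + block_zeros n = sigma_pos n.
Proof.
elim: n => [//|n IH].
by rewrite sigma_prefixS size_cat size_rcons size_nseq addnS IH addSn.
Qed.

Lemma nth_sigma_prefix n i :
  nth false (sigma_prefix n) i <-> exists2 k, k < n & sigma_pos k = i.
Proof.
elim: n i => [|n IH] i; first by rewrite nth_nil; split=> // [[]].
rewrite sigma_prefixS nth_cat nth_rcons size_nseq nth_nseq if_same.
have pos_n := size_sigma_prefix n.
case: ltnP => [lt_is | le_si].
  rewrite IH; split=> [[k lt_kn <-] | [k]]; first by exists k; rewrite // ltnW.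
  rewrite ltnS leq_eqVlt => /orP [/eqP -> eq_i | lt_kn <-]; last by exists k.
  by move: lt_is; rewrite -eq_i -pos_n ltnNge leq_addr.
have below k : k < n -> sigma_pos k < size (sigma_prefix n).
  move=> lt_kn; rewrite ltnNge; apply/negP => le_sk.
  have : nth false (sigma_prefix n) (sigma_pos k) by apply/IH; exists k.
  by rewrite nth_default.
split=> [| [k]].
  case: ltnP => // _; case: eqP => // eq_i _.
  by exists n => //; rewrite -pos_n -eq_i subnKC.
rewrite ltnS leq_eqVlt => /orP [/eqP -> <- | lt_kn eq_i].
  by rewrite -pos_n addKn ltnn eqxx.
by move: le_si; rewrite -eq_i leqNgt below.
Qed.

Lemma sigma_pos0 : sigma_pos 0 = b 0.
Proof. by []. Qed.

Lemma sigma_posS k : sigma_pos k.+1 = sigma_pos k + (b k.+1 == b k) + 1.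
Proof. by rewrite addn1. Qed.

Lemma sigma_pos_inc k : sigma_pos k < sigma_pos k.+1.
Proof. by rewrite /= ltnS leq_addr. Qed.

Lemma sigma_enum : ones_enum (sigma b) sigma_pos.
Proof.
split=> [|i]; first exact: sigma_pos_inc.
apply: iff_trans (nth_sigma_prefix i.+1 i) _.
split=> [[k _ <-] | [k <-]]; first by exists k.
by exists k; rewrite // ltnS (inc_ge sigma_pos_inc).
Qed.

Lemma odd_sigma_pos k : odd (sigma_pos k) = b k.
Proof.
elim: k => [|k IH] /=; first by case: (b 0).
by rewrite oddD IH; case: (b k); case: (b k.+1).
Qed.

End Sigma.

Lemma ex_nth_cons (x : bool) (l : seq bool) (Pj : nat -> Prop) :
  (exists2 j, nth false (x :: l) j & Pj j) <->
  (x /\ Pj 0) \/ exists2 j, nth false l j & Pj j.+1.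
Proof.
split=> [[[|j] /= l_j Pj_j] | [[x_ P0] | [j l_j Pj_j]]];
  by [left | right; exists j | exists 0 | exists j.+1].
Qed.

Lemma sum_from_split (a : nat -> nat) k c :
  \sum_(k <= m < k + c.+1) a m = a k + \sum_(k.+1 <= m < k.+1 + c) a m.
Proof. by rewrite addnS big_ltn ?ltnS ?leq_addr // addSn. Qed.

Lemma nth_ins a l k i :
  nth false (ins a l k) i <->
  exists2 j, nth false l j & i = j + 2 * \sum_(k <= m < k + count id (take j.+1 l)) a m.
Proof.
elim: l k i => [|x l IH] k i.
  by rewrite nth_nil; split=> // [[j]]; rewrite nth_nil.
rewrite ex_nth_cons; case: x => /=.
  rewrite take0 addn1 big_nat1 nth_cat size_nseq nth_nseq if_same.
  case: ltnP => [lt_i | le_i].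
    split=> // [[[_ eq_i] | [j _]]]; first by move: lt_i; rewrite eq_i; lia.
    by rewrite add1n sum_from_split => eq_i; move: lt_i; rewrite eq_i; lia.
  case eq_im: (i - 2 * a k) => [|m] /=.
    by split=> // _; left; split=> //; lia.
  rewrite IH; split=> [[j l_j eq_m] | [[_ eq_i] | [j l_j]]].
  - by right; exists j; rewrite // add1n sum_from_split; lia.
  - by lia.
  - by rewrite add1n sum_from_split => eq_i; exists j => //; lia.
case: i => [|m] /=.
  by split=> // [[[] // | [j _]]].
rewrite IH; split=> [[j l_j eq_m] | [[] // | [j l_j]]].
  by right; exists j; rewrite // add0n; lia.
by rewrite add0n => eq_i; exists j => //; lia.
Qed.

Lemma nth_pref (c : nat -> bool) n j : nth false (pref c n) j = (j < n) && c j.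
Proof.
rewrite /pref; case: ltnP => [lt_jn | le_nj]; first by rewrite nth_mkseq.
by rewrite nth_default // size_mkseq.
Qed.

Lemma take_pref (c : nat -> bool) j n : j <= n -> take j (pref c n) = pref c j.
Proof. by move=> le_jn; rewrite /pref /mkseq -map_take take_iota (minn_idPl le_jn). Qed.

Lemma insert_enum a c Pc : ones_enum c Pc ->
  ones_enum (insert a c) (fun k => Pc k + 2 * \sum_(m < k.+1) a m).
Proof.
move=> c_Pc; have [Pc_inc c_P] := c_Pc.
split=> [k | i]; first by rewrite [X in _ < _ + 2 * X]big_ord_recr /=; have := Pc_inc k; lia.
apply: iff_trans (nth_ins a (pref c i.+1) 0 i) _.
have count_at k : Pc k < i.+1 -> count id (take (Pc k).+1 (pref c i.+1)) = k.+1.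
  move=> lt_ki; rewrite take_pref // -/(ones_before c (Pc k).+1) ones_beforeS.
  by rewrite (ones_before_enum c_Pc) (enum_one c_Pc) addn1.
split=> [[j] | [k eq_i]].
  rewrite nth_pref => /andP [lt_ji /c_P [k eq_j]]; rewrite -eq_j in lt_ji *.
  by rewrite (count_at k lt_ji) add0n big_mkord => ->; exists k.
have lt_ki : Pc k < i.+1 by rewrite ltnS -eq_i leq_addr.
exists (Pc k); first by rewrite nth_pref (enum_one c_Pc) lt_ki.
by rewrite (count_at k lt_ki) add0n big_mkord eq_i.
Qed.

(* Strictly increasing sequences P with prescribed parities odd (P k) = b k,
   i.e. the position sequences of the elements of F_b. *)
Section ParityPositions.
Variables (b : nat -> bool) (P : nat -> nat).
Hypotheses (P_inc : forall k, P k < P k.+1) (P_odd : forall k, odd (P k) = b k).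

Let parity k : P k %% 2 = b k /\ sigma_pos b k %% 2 = b k.
Proof. by rewrite !modn2 P_odd odd_sigma_pos. Qed.

(* One step of the comparison with sigma_pos b: the gap P k - sigma_pos b k
   (an even number) never decreases, because parities force P to advance by
   at least as much as sigma_pos b. *)
Lemma sigma_pos_step k :
  sigma_pos b k <= P k -> sigma_pos b k.+1 + (P k - sigma_pos b k) <= P k.+1.
Proof.
have := P_inc k; have [pP pQ] := parity k; have [pP' pQ'] := parity k.+1.
by rewrite sigma_posS; move: pP pQ pP' pQ'; case: (b k); case: (b k.+1) => /=; lia.
Qed.

Lemma sigma_pos_least k : sigma_pos b k <= P k.
Proof.
elim: k => [|k IH]; last by have := sigma_pos_step IH; lia.
by have [pP _] := parity 0; rewrite sigma_pos0; move: pP; case: (b 0) => /=; lia.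
Qed.

Lemma shift_decomposition :
  exists D : nat -> nat, (forall k, D k <= D k.+1) /\
                         forall k, P k = sigma_pos b k + 2 * D k.
Proof.
exists (fun k => (P k - sigma_pos b k) %/ 2); split=> k.
  by have := sigma_pos_step (sigma_pos_least k); have := sigma_pos_least k.+1; lia.
have := sigma_pos_least k; have [pP pQ] := parity k.
by move: pP pQ; case: (b k) => /=; lia.
Qed.

(* With first position <= 1 and steps <= 2 the parities leave no choice. *)
Lemma tight_positions :
  P 0 <= 1 -> (forall k, P k.+1 <= (P k).+2) -> P =1 sigma_pos b.
Proof.
move=> P0 P_step; elim=> [|k IH].
  by have [pP _] := parity 0; rewrite sigma_pos0; move: pP P0; case: (b 0) => /=; lia.
have := P_inc k; have := P_step k; have [pP _] := parity k; have [pP' _] := parity k.+1.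
by rewrite sigma_posS -IH; move: pP pP'; case: (b k); case: (b k.+1) => /=; lia.
Qed.

End ParityPositions.

Lemma increments (D : nat -> nat) : (forall k, D k <= D k.+1) ->
  exists a : nat -> nat, forall k, \sum_(m < k.+1) a m = D k.
Proof.
move=> D_mono; exists (fun k => D k - (if k is k'.+1 then D k' else 0)).
elim=> [|k IH]; first by rewrite big_ord1 subn0.
by rewrite big_ord_recr IH /=; have := D_mono k; lia.
Qed.

Section Fibre.
Variable b : nat -> bool.

Lemma inF_enum v : inF b v <-> exists P, ones_enum v P /\ forall k, odd (P k) = b k.
Proof.
split=> [[v_C v_rho] | [P [v_P P_odd]]].
  by have [P v_P] := enum_of_inC v_C; exists P; split; last exact/(enum_rho v_P).
by split; [exact: (enum_inC v_P) | exact/(enum_rho v_P)].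
Qed.

Lemma insert_sigma_enum a :
  ones_enum (insert a (sigma b)) (fun k => sigma_pos b k + 2 * \sum_(m < k.+1) a m).
Proof. exact: (insert_enum a (sigma_enum b)). Qed.

Lemma odd_shifted_pos k x : odd (sigma_pos b k + 2 * x) = b k.
Proof. by rewrite oddD oddM odd_sigma_pos /= addbF. Qed.

Lemma insert_sigma_inF a : inF b (insert a (sigma b)).
Proof.
apply/inF_enum; eexists; split; first exact: insert_sigma_enum.
by move=> k; apply: odd_shifted_pos.
Qed.

Lemma fibre_characterization v : inF b v <-> exists a, v =1 insert a (sigma b).
Proof.
split=> [/inF_enum [P [v_P P_odd]] | [a eq_v]].
  have [D [D_mono P_D]] := shift_decomposition (proj1 v_P) P_odd.
  have [a sum_a] := increments D_mono; exists a.
  by apply: (enum_ext v_P (insert_sigma_enum a)) => k; rewrite P_D sum_a.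
apply/inF_enum; eexists; split; first exact: (enum_congr eq_v _ (insert_sigma_enum a)).
by move=> k; apply: odd_shifted_pos.
Qed.

Lemma sigma_inF : inF b (sigma b).
Proof.
by apply/inF_enum; exists (sigma_pos b); split; [exact: sigma_enum | exact: odd_sigma_pos].
Qed.

Lemma sigma_no00 : no00 (sigma b).
Proof.
apply/(no00_enum (sigma_enum b)); split=> [|k]; first by rewrite sigma_pos0 leq_b1.
by rewrite sigma_posS; lia.
Qed.

Lemma no00_unique v : inF b v -> no00 v -> v =1 sigma b.
Proof.
move=> /inF_enum [P [v_P P_odd]] /(no00_enum v_P) [P0 P_step].
exact: (enum_ext v_P (sigma_enum b) (tight_positions (proj1 v_P) P_odd P0 P_step)).
Qed.

(* sigma(b) is the lexicographic maximum of F_b: at the first index where the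
   enumerations differ, the one of sigma(b) comes first (sigma_pos_least). *)
Lemma sigma_lex_max v : inF b v -> lex_le v (sigma b).
Proof.
move=> /inF_enum [P [v_P P_odd]].
have [ex_diff | same] := classic (exists n, P n != sigma_pos b n); last first.
  left; apply: (enum_ext v_P (sigma_enum b)) => k.
  by apply/eqP/negPn/negP => neq_k; apply: same; exists k.
case: (ex_minnP ex_diff) => n neq_n min_n.
apply: (lex_first_difference v_P (sigma_enum b) (n := n)).
  move=> k lt_kn; apply/eqP/negPn/negP => /min_n; rewrite leqNgt lt_kn //.
by rewrite ltn_neqAle eq_sym neq_n (sigma_pos_least (proj1 v_P) P_odd).
Qed.

(* Coding a bit sequence e into the fibre: the k-th one of v sits at
   sigma_pos b k + 2 (k + e k), so the digit of v at sigma_pos b n + 2 (n + 1)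
   is exactly e n. *)
Lemma probe_bit (e : nat -> bool) v :
  ones_enum v (fun k => sigma_pos b k + 2 * (k + e k)) ->
  forall n, v (sigma_pos b n + 2 * n.+1) = e n.
Proof.
move=> v_P n; have Q_inc := inc_lt (@sigma_pos_inc b).
case e_n: (e n).
  by have := enum_one v_P n; rewrite e_n addn1.
apply: (enum_zero v_P) => k; apply/eqP.
case: (ltngtP k n) => [lt_kn | lt_nk | ->].
- by have := Q_inc _ _ lt_kn; lia.
- by have := Q_inc _ _ lt_nk; lia.
- by rewrite e_n; lia.
Qed.

(* Cantor's diagonal argument: choosing e n as the negation of the n-th
   sequence at the n-th probe position gives an element of F_b missed by f. *)
Lemma fibre_uncountable : ~ countable_set (inF b).
Proof.
move=> [f f_cover].
pose e n := ~~ f n (sigma_pos b n + 2 * n.+1).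
have D_mono k : k + e k <= k.+1 + e k.+1 by case: (e k); case: (e k.+1) => /=; lia.
have [a sum_a] := increments D_mono.
have [n f_n] := f_cover _ (insert_sigma_inF a).
have v_P : ones_enum (insert a (sigma b)) (fun k => sigma_pos b k + 2 * (k + e k)).
  by apply: (enum_congr (frefl _) _ (insert_sigma_enum a)) => k; rewrite sum_a.
by have := probe_bit v_P n; rewrite -f_n /e; case: (f n _).
Qed.

End Fibre.

Theorem proposition2p2 (b : nat -> bool) :
  (forall v : nat -> bool,
      inF b v <-> exists a : nat -> nat, v =1 insert a (sigma b)) /\
  ~ countable_set (inF b) /\
  (inF b (sigma b) /\ no00 (sigma b) /\
     forall v, inF b v -> no00 v -> v =1 sigma b) /\
  (inF b (sigma b) /\ forall v, inF b v -> lex_le v (sigma b)).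
Proof.
split; first exact: fibre_characterization.
split; first exact: fibre_uncountable.
split; first by split; [exact: sigma_inF | split; [exact: sigma_no00 | exact: no00_unique]].
split; [exact: sigma_inF | exact: sigma_lex_max].
Qed.
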